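(* Let $f$ be an invertible $\mathbb F_q$-linearised polynomial over $\mathbb F_{q^h}$, and take $a \in \mathbb F_{q^h}$. Then $f(a f^{-1}(X))$ is linear if and only if $f$ is $\mathbb F_q(a)$-semi-linear.
   Context: Let $q$ be a prime power and $h \geq 1$. An $\mathbb F_q$-linearised polynomial over $\mathbb F_{q^h}$ is a polynomial of the form $f(X) = \sum_{l=0}^{h-1} f_l X^{q^l}$ with coefficients $f_l \in \mathbb F_{q^h}$; it defines an $\mathbb F_q$-linear map $\mathbb F_{q^h} \to \mathbb F_{q^h}$, and it is called invertible if this map is bijective, in which case $f^{-1}$ denotes the inverse map, which is again an $\mathbb F_q$-linearised polynomial. Identities between linearised polynomials are understood as identities of functions on $\mathbb F_{q^h}$ (written $\equiv$). ''$f(a f^{-1}(X))$ is linear'' means $f(a f^{-1}(X)) \equiv bX$ for some constant $b \in \mathbb F_{q^h}$. $f$ is called $\mathbb F_q(a)$-semi-linear if there exists a field automorphism $\sigma$ of $\mathbb F_{q^h}$ such that $f(\alpha X) = \alpha^\sigma f(X)$ for all $\alpha \in \mathbb F_q(a)$ and all $X \in \mathbb F_{q^h}$. *)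

From HB Require Import structures.
From mathcomp Require Import all_boot all_order all_algebra.
Set Implicit Arguments. Unset Strict Implicit. Unset Printing Implicit Defensive.
Import GRing.Theory.
Local Open Scope ring_scope.

Definition prime_power (q : nat) : Prop :=
  exists p k : nat, [/\ prime p, (0 < k)%N & q = (p ^ k)%N].

Definition linpol (L : finFieldType) (q h : nat) (c : 'I_h -> L) (x : L) : L :=
  \sum_(l < h) c l * x ^+ (q ^ l)%N.

Definition is_subfield (L : fieldType) (S : L -> Prop) : Prop :=
  [/\ S 0, S 1,
      (forall x y, S x -> S y -> S (x + y)),
      (forall x, S x -> S (- x)) &
      ((forall x y, S x -> S y -> S (x * y)) /\
       (forall x, S x -> S (x^-1)))].

(* membership in F_q(a): the smallest subfield of L containing the subfield
   F_q = {x | x^q = x} and the element a *)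
Definition in_Fq_adj (L : fieldType) (q : nat) (a alpha : L) : Prop :=
  forall S : L -> Prop, is_subfield S ->
    (forall x, x ^+ q = x -> S x) -> S a -> S alpha.

Definition Fqa_semilinear (L : fieldType) (q : nat) (a : L) (f : L -> L) : Prop :=
  exists sigma : {rmorphism L -> L}, bijective sigma /\
    forall alpha x, in_Fq_adj q a alpha -> f (alpha * x) = sigma alpha * f x.

From HB Require Import structures.
From mathcomp Require Import all_boot all_order all_algebra.
From mathcomp Require Import finfield.
Set Implicit Arguments. Unset Strict Implicit. Unset Printing Implicit Defensive.
Import GRing.Theory.
Local Open Scope ring_scope.

(* If f(a f^-1(X)) = bX then f(aY) = b f(Y); comparing the coefficients of
   these two linearised polynomials of q-degree < h (which are determined by
   their values on L, since q^(h-1) < |L|) gives c_l a^(q^l) = b c_l.  Hence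
   a^(q^l) = a^(q^l0) for all l in the support of c, where c_l0 <> 0.  The
   elements on which all the Frobenius powers x |-> x^(q^l) of the support
   agree form a subfield containing F_q and a, hence F_q(a), and on it f is
   semi-linear for x |-> x^(q^l0).  Conversely semi-linearity at alpha = a
   gives b = sigma(a). *)

Section FrobeniusPower.
Variables (R : comNzRingType) (n : nat).
Hypothesis pcharRn : [pchar R].-nat n.

Definition Frobenius_pow of [pchar R].-nat n := fun x : R => x ^+ n.

Lemma Frobenius_pow_is_nmod_morphism : nmod_morphism (Frobenius_pow pcharRn).
Proof.
split; rewrite /Frobenius_pow; last by move=> x y; rewrite exprDn_pchar.
by rewrite expr0n; case/andP: pcharRn; case: n.
Qed.

Lemma Frobenius_pow_is_monoid_morphism : monoid_morphism (Frobenius_pow pcharRn).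
Proof. by split; rewrite /Frobenius_pow ?expr1n // => x y; rewrite exprMn. Qed.

HB.instance Definition _ := GRing.isNmodMorphism.Build R R
  (Frobenius_pow pcharRn) Frobenius_pow_is_nmod_morphism.
HB.instance Definition _ := GRing.isMonoidMorphism.Build R R
  (Frobenius_pow pcharRn) Frobenius_pow_is_monoid_morphism.

End FrobeniusPower.

Lemma fixed_exprXn (R : pzSemiRingType) (q l : nat) (x : R) :
  x ^+ q = x -> x ^+ (q ^ l) = x.
Proof. by move=> xq; elim: l => [|l IHl]; rewrite ?expr1 // expnS exprM xq IHl. Qed.

Lemma prime_power_gt1 (q : nat) : prime_power q -> (1 < q)%N.
Proof. by case=> p [k [pp k0 ->]]; rewrite -[1%N](expn0 p) ltn_exp2l ?prime_gt1. Qed.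

Lemma pnat_pchar_prime_power (L : finFieldType) (q h : nat) :
  prime_power q -> #|L| = (q ^ h)%N -> [pchar L].-nat q.
Proof.
case=> p [k [pp k0 ->]] cardL.
have pcharLp : p \in [pchar L].
  by apply: (card_finPcharP (n := k * h)); rewrite // cardL expnM.
by rewrite (eq_pnat _ (pcharf_eq pcharLp)) pnatX pnat_id.
Qed.

Section Subfields.
Variable L : fieldType.

Lemma is_subfield_equalizer (I : Type) (sigma tau : I -> {rmorphism L -> L}) :
  is_subfield (fun x => forall i, sigma i x = tau i x).
Proof.
split; [by move=> i; rewrite !rmorph0 | by move=> i; rewrite !rmorph1 | | |split].
- by move=> x y Ex Ey i; rewrite !rmorphD Ex Ey.
- by move=> x Ex i; rewrite !rmorphN Ex.
- by move=> x y Ex Ey i; rewrite !rmorphM Ex Ey.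
- by move=> x Ex i; rewrite !fmorphV Ex.
Qed.

Lemma in_Fq_adj_self (q : nat) (a : L) : in_Fq_adj q a a.
Proof. by move=> S _ _. Qed.

End Subfields.

Section LinearisedPolynomials.
Variables (L : finFieldType) (q h : nat).
Hypothesis q_gt1 : (1 < q)%N.

Definition linpoly (d : 'I_h -> L) : {poly L} := \sum_(l < h) d l *: 'X^(q ^ l).

Lemma horner_linpoly d x : (linpoly d).[x] = linpol q d x.
Proof.
by rewrite horner_sum; apply: eq_bigr => l _; rewrite hornerZ hornerXn.
Qed.

Lemma coef_linpolyE d j : (linpoly d)`_j = \sum_(l < h) d l * (j == q ^ l)%N%:R.
Proof. by rewrite coef_sum; apply: eq_bigr => l _; rewrite coefZ coefXn. Qed.

Lemma coef_linpoly d (l : 'I_h) : (linpoly d)`_(q ^ l) = d l.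
Proof.
rewrite coef_linpolyE (bigD1 l) //= eqxx mulr1 big1 ?addr0 // => i neq_il.
by rewrite eqn_exp2l // eq_sym -[_ == _]/(i == l) (negbTE neq_il) mulr0.
Qed.

Lemma size_linpoly d : (size (linpoly d) <= q ^ h)%N.
Proof.
apply/leq_sizeP => j le_qh_j; rewrite coef_linpolyE big1 // => l _.
have lt_ql_j : (q ^ l < j)%N by apply: leq_trans le_qh_j; rewrite ltn_exp2l.
by rewrite eq_sym (ltn_eqF lt_ql_j) mulr0.
Qed.

Lemma linpol_coef_inj (c d : 'I_h -> L) :
  (q ^ h <= #|L|)%N -> linpol q c =1 linpol q d -> c =1 d.
Proof.
move=> le_qh_L cd l; rewrite -!coef_linpoly.
suff : linpoly c - linpoly d = 0 by move/eqP; rewrite subr_eq0 => /eqP->.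
apply: (@roots_geq_poly_eq0 _ _ (enum L)).
- by apply/allP => x _; rewrite /root hornerD hornerN !horner_linpoly cd subrr.
- exact: enum_uniq.
- rewrite -cardE (leq_trans _ le_qh_L) // (leq_trans (size_polyD _ _)) //.
  by rewrite geq_max size_polyN !size_linpoly.
Qed.

Variable c : 'I_h -> L.

Lemma linpolMl b x : b * linpol q c x = linpol q (fun l => b * c l) x.
Proof. by rewrite mulr_sumr; apply: eq_bigr => l _; rewrite mulrA. Qed.

Lemma linpolMr a x : linpol q c (a * x) = linpol q (fun l => c l * a ^+ (q ^ l)) x.
Proof. by apply: eq_bigr => l _; rewrite exprMn mulrA. Qed.

Lemma linpol_semilinear alpha s x :
    (forall l, c l != 0 -> alpha ^+ (q ^ l) = s) ->
  linpol q c (alpha * x) = s * linpol q c x.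
Proof.
move=> alpha_s; rewrite linpolMr linpolMl; apply: eq_bigr => l _.
have [->|/alpha_s->] := eqVneq (c l) 0; first by rewrite mulr0 !mul0r.
by rewrite (mulrC s).
Qed.

Lemma linpol_coef_neq0 : injective (linpol q c) -> exists l, c l != 0.
Proof.
move=> f_inj; apply/existsP; apply: contraT; rewrite negb_exists => /forallP c0.
have f0 x : linpol q c x = 0.
  by apply: big1 => l _; rewrite (eqP (negPn (c0 l))) mul0r.
by have := oner_neq0 L; rewrite (f_inj 1 0) ?eqxx // !f0.
Qed.

End LinearisedPolynomials.

Lemma semilinear_of_linear_conjugate (L : finFieldType) (q h : nat)
    (c : 'I_h -> L) (a b : L) :
  prime_power q -> #|L| = (q ^ h)%N -> injective (linpol q c) ->
  (forall y, linpol q c (a * y) = b * linpol q c y) ->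
  Fqa_semilinear q a (linpol q c).
Proof.
move=> q_pp cardL f_inj fab.
have q_gt1 := prime_power_gt1 q_pp.
have pcharLq l : [pchar L].-nat (q ^ l)%N.
  by rewrite pnatX (pnat_pchar_prime_power q_pp cardL).
have coef_ab l : c l * a ^+ (q ^ l) = b * c l.
  have le_qh_L : (q ^ h <= #|L|)%N by rewrite cardL.
  apply: (linpol_coef_inj q_gt1 (c := fun l => c l * a ^+ (q ^ l))
                                (d := fun l => b * c l) le_qh_L) => y.
  by rewrite -linpolMr -linpolMl.
have [l0 cl0] := linpol_coef_neq0 f_inj.
have b_frob : b = a ^+ (q ^ l0) by apply: (mulIf cl0); rewrite -coef_ab mulrC.
have a_frob l : c l != 0 -> a ^+ (q ^ l) = b.
  by move=> cl; apply: (mulfI cl); rewrite coef_ab mulrC.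
pose frob l : {rmorphism L -> L} := Frobenius_pow (pcharLq l).
have Fqa_frob alpha : in_Fq_adj q a alpha ->
    forall l, c l != 0 -> alpha ^+ (q ^ l) = alpha ^+ (q ^ l0).
  move=> Fqa_alpha l cl; pose I := {l | c l != 0}.
  apply: (Fqa_alpha _ (is_subfield_equalizer (fun i : I => frob (val i))
                                              (fun=> frob l0)) _ _ (exist _ l cl)).
  - by move=> x xq i; rewrite /= /Frobenius_pow !fixed_exprXn.
  - by move=> i; rewrite /= /Frobenius_pow (a_frob _ (valP i)) b_frob.
exists (frob l0); split; first exact/injF_bij/fmorph_inj.
by move=> alpha x /Fqa_frob; apply: linpol_semilinear.
Qed.

Theorem lemma5p2 (L : finFieldType) (q h : nat) (c : 'I_h -> L)
    (finv : L -> L) (a : L) :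
  prime_power q -> (0 < h)%N -> #|L| = (q ^ h)%N ->
  cancel (linpol q c) finv -> cancel finv (linpol q c) ->
  (exists b : L, forall x : L, linpol q c (a * finv x) = b * x) <->
  Fqa_semilinear q a (linpol q c).
Proof.
move=> q_pp _ cardL fK finvK; split.
- case=> b fab.
  apply: (semilinear_of_linear_conjugate (b := b) q_pp cardL (can_inj fK)) => y.
  by have := fab (linpol q c y); rewrite fK.
- case=> sigma [_ f_sigma]; exists (sigma a) => x.
  by rewrite f_sigma ?finvK //; apply: in_Fq_adj_self.
Qed.
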